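(* Let $\mathcal{X}\subset\mathbb{R}^n$ be open, connected and bounded, let $1\le m<n$, and let $\{(x_i,u_i,\dot{x}_i)\}_{i=1}^{N}\subset \mathcal{X}\times\mathbb{R}^m\times\mathbb{R}^n$ be a training dataset. Let $X_c=\{x_1,\ldots,x_{N_c}\}\subset\mathcal{X}$ be a finite constraint set containing all the training states $x_i$, $i=1,\ldots,N$. Let $K^f$ and $K^B$ be $\mathcal{C}^2$ operator-valued positive definite kernels on $\mathcal{X}\times\mathcal{X}$ with associated $\mathbb{R}^n$-valued RKHSs $\mathcal{H}_K^f$ and $\mathcal{H}_K^B$, and define the finite-dimensional subspaces $$\mathcal{V}_f=\Big\{\sum_{i=1}^{N_c}K^f_{x_i}a_i+\sum_{i=1}^{N_c}\sum_{p=1}^n\partial_pK^f_{x_i}a'_{ip}\ :\ a_i,a'_{ip}\in\mathbb{R}^n\Big\}\subset\mathcal{H}_K^f,$$ $$\mathcal{V}_B=\Big\{\sum_{i=1}^{N_c}K^B_{x_i}c_i+\sum_{i=1}^{N_c}\sum_{p=1}^n\partial_pK^B_{x_i}c'_{ip}\ :\ c_i,c'_{ip}\in\mathbb{R}^n\Big\}\subset\mathcal{H}_K^B.$$ Suppose the kernel $K^B$ is chosen such that every $g\in\mathcal{H}_K^B$ satisfies $g^j(x)=0$ for $j=1,\ldots,n-m$ and all $x$. Fix $\lambda>0$, $\mu_f,\mu_b>0$, and a fixed differentiable symmetric-matrix-valued function $W:\mathcal{X}\to\mathbb{S}_n$. Consider the problem $$\min_{\hat f\in\mathcal{H}_K^f,\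 \hat b_j\in\mathcal{H}_K^B,\ j=1,\ldots,m}\ J_d(\hat f,\hat B)\quad\text{s.t.}\quad \mathcal{F}_\lambda(x_i;\hat f,W)\preceq 0\ \ \forall x_i\in X_c,$$ where $\hat B=(\hat b_1,\ldots,\hat b_m)$, $$J_d(\hat f,\hat B)=\sum_{i=1}^N\big\|\hat f(x_i)+\hat B(x_i)u_i-\dot x_i\big\|^2+\mu_f\|\hat f\|^2_{\mathcal{H}_K^f}+\mu_b\sum_{j=1}^m\|\hat b_j\|^2_{\mathcal{H}_K^B},$$ and $$\mathcal{F}_\lambda(x;\hat f,W)=\hat B_\perp^T\Big(-\partial_{\hat f}W(x)+\tfrac{\partial\hat f(x)}{\partial x}W(x)+\big(\tfrac{\partial\hat f(x)}{\partial x}W(x)\big)^T+2\lambda W(x)\Big)\hat B_\perp,\qquad \hat B_\perp=\begin{bmatrix}I_{n-m}\\ O_{m\times(n-m)}\end{bmatrix}.$$ Suppose the feasible set of this LMI constraint is non-empty, and let $f^*$ and $b_j^*$, $j=1,\ldots,m$, be optimizers of this problem. Then $f^*\in\mathcal{V}_f$ and $b_j^*\in\mathcal{V}_B$ for all $j=1,\ldots,m$.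
   Context: For an operator-valued positive definite kernel $K:\mathcal{X}\times\mathcal{X}\to\mathbb{R}^{n\times n}$ (i.e. $K(x,z)^T=K(z,x)$ and $\sum_{i,j}\langle y_i,K(x_i,x_j)y_j\rangle\ge0$ for all finite families), the RKHS $\mathcal{H}_K$ is the completion of the span of the functions $K_xy:=K(\cdot,x)y$ ($x\in\mathcal{X}$, $y\in\mathbb{R}^n$) under the inner product $\langle K_xy,K_zw\rangle_{\mathcal{H}_K}=\langle y,K(x,z)w\rangle$; it satisfies $\langle f(x),y\rangle=\langle f,K_xy\rangle_{\mathcal{H}_K}$. For $K\in\mathcal{C}^2$, $\partial_jK_xy$ denotes the function $z\mapsto \frac{\partial}{\partial s^j}K(r,s)\big|_{r=z,s=x}\,y$ (elementwise derivative). For a vector field $g$ and matrix function $W$, $\partial_gW(x)$ denotes the matrix whose $(p,q)$ entry is $\langle \nabla w_{pq}(x),g(x)\rangle$, the derivative of $w_{pq}$ along $g$. $\mathbb{S}_n$ is the set of symmetric $n\times n$ real matrices; $\preceq$ is the Loewner order. The matrix $\hat B_\perp$ satisfies $\hat B(x)^T\hat B_\perp=0$ because of the sparsity structure of $\mathcal{H}_K^B$. *)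

From mathcomp Require Import all_boot all_algebra all_classical all_reals all_analysis.
Import GRing.Theory Num.Theory numFieldNormedType.Exports.
Set Implicit Arguments. Unset Strict Implicit. Unset Printing Implicit Defensive.
Local Open Scope classical_set_scope.
Local Open Scope ring_scope.

Section Defs.
Variable R : realType.

Definition vfun (n : nat) := 'rV[R]_n -> 'cV[R]_n.

Definition ebasis (n : nat) (i : 'I_n) : 'rV[R]_n := delta_mx 0 i.

Definition pdir2 (n : nat) (i : 'I_(n + n)) : 'rV[R]_n * 'rV[R]_n :=
  match fintype.split i with inl a => (ebasis a, 0) | inr b => (0, ebasis b) end.

Definition C2_on (V : normedModType R) (k : nat) (U : set V) (dirs : 'I_k -> V)
  (g : V -> R) : Prop :=
  (forall x, U x -> {for x, continuous g}) /\
  forall i : 'I_k,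
    (forall x, U x -> derivable g x (dirs i)) /\
    (forall x, U x -> {for x, continuous ('D_(dirs i) g)}) /\
    forall j : 'I_k,
      (forall x, U x -> derivable ('D_(dirs i) g) x (dirs j)) /\
      (forall x, U x -> {for x, continuous ('D_(dirs j) ('D_(dirs i) g))}).

Definition kernel_C2 (n : nat) (X : set 'rV[R]_n) (K : 'rV[R]_n -> 'rV[R]_n -> 'M[R]_n) :=
  forall a b : 'I_n, C2_on (X `*` X) (@pdir2 n) (fun p => K p.1 p.2 a b).

Definition pd_kernel (n : nat) (X : set 'rV[R]_n) (K : 'rV[R]_n -> 'rV[R]_n -> 'M[R]_n) :=
  (forall x z, X x -> X z -> (K x z)^T = K z x) /\
  forall (k : nat) (xs : 'I_k -> 'rV[R]_n) (ys : 'I_k -> 'cV[R]_n),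
    (forall i, X (xs i)) ->
    0 <= \sum_(i < k) \sum_(j < k) ((ys i)^T *m K (xs i) (xs j) *m ys j) 0 0.

Definition Ksec (n : nat) (K : 'rV[R]_n -> 'rV[R]_n -> 'M[R]_n) (x : 'rV[R]_n)
  (y : 'cV[R]_n) : vfun n := fun z => K z x *m y.

Definition dKsec (n : nat) (K : 'rV[R]_n -> 'rV[R]_n -> 'M[R]_n) (p : 'I_n)
  (x : 'rV[R]_n) (y : 'cV[R]_n) : vfun n :=
  fun z => (\matrix_(a < n, b < n) 'D_(ebasis p) (fun s => K z s a b) x) *m y.

(* (H, ip) is the R^n-valued RKHS of the kernel K on X: a real Hilbert space
   of functions on X (functions are identified when they agree on X) that
   contains every section K_x y and has the reproducing property. *)
Definition is_rkhs (n : nat) (X : set 'rV[R]_n) (K : 'rV[R]_n -> 'rV[R]_n -> 'M[R]_n)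
  (H : set (vfun n)) (ip : vfun n -> vfun n -> R) : Prop :=
  H (fun _ => 0) /\
      (forall f g, H f -> H g -> H (fun z => f z + g z)) /\
      (forall (c : R) f, H f -> H (fun z => c *: f z)) /\
      (forall f g, H f -> H g -> ip f g = ip g f) /\
      (forall (c : R) f g h, H f -> H g -> H h ->
          ip (fun z => c *: f z + g z) h = c * ip f h + ip g h) /\
      (forall f, H f -> 0 <= ip f f) /\
      (forall f, H f -> ip f f = 0 -> forall x, X x -> f x = 0) /\
      (forall u : nat -> vfun n, (forall k, H (u k)) ->
         (forall e : R, 0 < e -> exists N, forall i j, (N <= i)%N -> (N <= j)%N ->
             ip (fun z => u i z - u j z) (fun z => u i z - u j z) < e) ->
         exists f, H f /\ forall e : R, 0 < e -> exists N, forall i, (N <= i)%N ->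
             ip (fun z => u i z - f z) (fun z => u i z - f z) < e) /\
      (forall x y, X x -> H (Ksec K x y)) /\
      (forall f x y, H f -> X x -> ((y^T *m f x) 0 0) = ip f (Ksec K x y)).

Definition jac (n : nat) (f : vfun n) (x : 'rV[R]_n) : 'M[R]_n :=
  \matrix_(a < n, p < n) 'D_(ebasis p) (fun z => f z a 0) x.

Definition dirW (n : nat) (W : 'rV[R]_n -> 'M[R]_n) (g : vfun n) (x : 'rV[R]_n) : 'M[R]_n :=
  \matrix_(p < n, q < n) \sum_(r < n) 'D_(ebasis r) (fun z => W z p q) x * g x r 0.

Definition Bperp (n m : nat) : 'M[R]_(n, n - m) :=
  \matrix_(i < n, j < n - m) ((i : nat) == j)%:R.

Definition Flam (n m : nat) (lam : R) (f : vfun n) (W : 'rV[R]_n -> 'M[R]_n)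
  (x : 'rV[R]_n) : 'M[R]_(n - m) :=
  (Bperp n m)^T *m (- dirW W f x + jac f x *m W x + (jac f x *m W x)^T
                    + (2 * lam) *: W x) *m Bperp n m.

Definition psd (k : nat) (M : 'M[R]_k) : Prop :=
  forall v : 'cV[R]_k, 0 <= (v^T *m M *m v) 0 0.
Definition loewner_le (k : nat) (A B : 'M[R]_k) : Prop := psd (B - A).

Definition Bhat (n m : nat) (b : 'I_m -> vfun n) (x : 'rV[R]_n) : 'M[R]_(n, m) :=
  \matrix_(a < n, j < m) b j x a 0.

Definition sqnorm (n : nat) (v : 'cV[R]_n) : R := \sum_(a < n) (v a 0) ^+ 2.

Definition Jd (n m N : nat) (xs : 'I_N -> 'rV[R]_n) (us : 'I_N -> 'cV[R]_m)
  (xds : 'I_N -> 'cV[R]_n) (muf mub : R) (ipf ipb : vfun n -> vfun n -> R)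
  (f : vfun n) (b : 'I_m -> vfun n) : R :=
  \sum_(i < N) sqnorm (f (xs i) + Bhat b (xs i) *m us i - xds i)
  + muf * ipf f f + mub * \sum_(j < m) ipb (b j) (b j).

Definition in_V (n Nc : nat) (X : set 'rV[R]_n) (K : 'rV[R]_n -> 'rV[R]_n -> 'M[R]_n)
  (xc : 'I_Nc -> 'rV[R]_n) (f : vfun n) : Prop :=
  exists (a : 'I_Nc -> 'cV[R]_n) (a' : 'I_Nc -> 'I_n -> 'cV[R]_n),
    forall z, X z ->
      f z = \sum_(i < Nc) Ksec K (xc i) (a i) z
            + \sum_(i < Nc) \sum_(p < n) dKsec K p (xc i) (a' i p) z.

End Defs.

From mathcomp Require Import all_boot all_algebra all_classical all_reals all_analysis.
From mathcomp Require Import ring lra.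
Import order.Order.TTheory GRing.Theory Num.Theory numFieldNormedType.Exports.
Set Implicit Arguments. Unset Strict Implicit. Unset Printing Implicit Defensive.
Local Open Scope classical_set_scope.
Local Open Scope ring_scope.

(** The constraint [F_lambda(x_i; f, W) <= 0] and the fit term of [J_d] see [f] and the
  [b_j] only through their values and first partial derivatives at the points of [X_c].
  In the RKHS these are continuous linear functionals: [g |-> g(x)_a] is represented by
  [K_x e_a] and [g |-> d_p g_a(x)] by [d_p K_x e_a], the limit in [H] of the difference
  quotients of [K_{x + t e_p} e_a] as [t -> 0]; they form a Cauchy family because [K] is
  C^2 and [H] is complete.  Projecting an optimizer orthogonally onto the finite span of
  these representers preserves all those values and derivatives, hence feasibility and
  the fit term, and does not increase the norm; optimality then forces the orthogonal
  remainder to vanish on [X], so the optimizer lies in [V_f] (resp. [V_B]). *)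

Section LineRestriction.
Variables (R : realType) (V : normedModType R).

Lemma difference_quotient_line (G : V -> R) (v b : V) (u : R) :
  (fun h : R => h^-1 *: (((fun t : R => G (t *: v + b)) \o shift u) (h *: 1) - G (u *: v + b)))
  = (fun h : R => h^-1 *: ((G \o shift (u *: v + b)) (h *: v) - G (u *: v + b))).
Proof. by apply/funext => h /=; rewrite scalerDl -addrA [h%:A]mulr1. Qed.

Lemma derivable_line (G : V -> R) (v b : V) (u : R) :
  derivable G (u *: v + b) v -> derivable (fun t : R => G (t *: v + b)) u 1.
Proof. by rewrite /derivable difference_quotient_line. Qed.

Lemma derive_line (G : V -> R) (v b : V) (u : R) :
  'D_1 (fun t : R => G (t *: v + b)) u = 'D_v G (u *: v + b).
Proof. by rewrite /derive difference_quotient_line. Qed.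

Lemma MVT0 (F : R -> R) (t : R) :
  (forall u, `|u| <= `|t| -> derivable F u 1) ->
  exists2 c, `|c| <= `|t| & F t - F 0 = 'D_1 F c * t.
Proof.
move=> dF; have [t0|t0] := leP 0 t.
  have [||c] := @MVT_segment R F (fun x => 'D_1 F x) 0 t t0.
  - move=> x; rewrite in_itv /= => /andP[x0 xt]; apply/derivableP/dF.
    by rewrite !ger0_norm // ltW.
  - apply: derivable_within_continuous => x; rewrite in_itv /= => /andP[x0 xt].
    by apply: dF; rewrite !ger0_norm.
  rewrite in_itv /= => /andP[c0 ct] ->; exists c; last by rewrite subr0.
  by rewrite !ger0_norm.
have [||c] := @MVT_segment R F (fun x => 'D_1 F x) t 0 (ltW t0).
- move=> x; rewrite in_itv /= => /andP[tx x0]; apply/derivableP/dF.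
  by rewrite !ltr0_norm // lerN2 ltW.
- apply: derivable_within_continuous => x; rewrite in_itv /= => /andP[tx x0].
  by apply: dF; rewrite !ler0_norm ?lerN2 // ltW.
rewrite in_itv /= => /andP[tc c0] E; exists c; first by rewrite !ler0_norm ?lerN2 // ltW.
by apply: oppr_inj; rewrite opprB E sub0r mulrN.
Qed.

End LineRestriction.

Section MixedDifferenceQuotient.
Variables (R : realType) (V : normedModType R).

Lemma pair_scaleD (u : R) (a b c d : V) :
  u *: (a, b) + (c, d) = (u *: a + c, u *: b + d).
Proof. by []. Qed.

Lemma nbhs0_line (x e : V) (P : set V) :
  nbhs x P -> \forall u \near 0, P (u *: e + x).
Proof.
have : (fun u : R => u *: e + x) @ 0 --> x.
  rewrite -[X in _ --> X]add0r -[X in X + x](scale0r e).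
  by apply: cvgD; [exact: scalel_continuous | exact: cvg_cst].
by apply.
Qed.

Lemma second_difference_MVT (G : V * V -> R) (U : set V) (e x : V) (s t : R) :
  (forall y z, U y -> U z -> derivable G (y, z) (e, 0)) ->
  (forall y z, U y -> U z -> derivable ('D_(e, 0) G) (y, z) (0, e)) ->
  (forall u, `|u| <= `|s| -> U (u *: e + x)) -> (forall u, `|u| <= `|t| -> U (u *: e + x)) ->
  exists xi eta, [/\ `|xi| <= `|s|, `|eta| <= `|t| &
    G (s *: e + x, t *: e + x) - G (x, t *: e + x) - G (s *: e + x, x) + G (x, x)
    = 'D_(0, e) ('D_(e, 0) G) (xi *: e + x, eta *: e + x) * t * s].
Proof.
move=> dG ddG Us Ut; have Ux : U x by have := Us 0; rewrite normr0 scale0r add0r; apply.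
pose F y := fun u : R => G (u *: (e, 0) + (x, y)).
have dF y u : U y -> `|u| <= `|s| -> derivable (F y) u 1.
  move=> Uy us; rewrite /F; apply: derivable_line; rewrite pair_scaleD scaler0 add0r.
  by apply: dG => //; exact: Us.
have dFF u : `|u| <= `|s| -> derivable (F (t *: e + x) - F x) u 1.
  by move=> us; apply: derivableB; apply: dF => //; exact: Ut.
have [xi xis Exi] := MVT0 dFF.
rewrite (deriveB (dF _ _ (Ut t (lexx _)) xis) (dF _ _ Ux xis)) /F !derive_line in Exi.
pose D1 := 'D_(e, 0) G.
pose F' := fun w : R => D1 (w *: (0, e) + (xi *: e + x, x)).
have dF' w : `|w| <= `|t| -> derivable F' w 1.
  move=> wt; rewrite /F'; apply: derivable_line; rewrite pair_scaleD scaler0 add0r.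
  by apply: ddG; [exact: Us | exact: Ut].
have [eta etat Eeta] := MVT0 dF'.
rewrite derive_line in Eeta.
exists xi, eta; split => //.
have -> : G (s *: e + x, t *: e + x) - G (x, t *: e + x) - G (s *: e + x, x) + G (x, x)
    = (F (t *: e + x) s - F x s) - (F (t *: e + x) 0 - F x 0).
  by rewrite /F !pair_scaleD !scaler0 !scale0r !add0r; lra.
rewrite [_ - F x s]/= Exi.
have -> : xi *: (e, 0) + (x, t *: e + x) = t *: (0, e) + (xi *: e + x, x).
  by rewrite !pair_scaleD ?scaler0 ?scale0r ?add0r ?addr0.
have -> : xi *: (e, 0) + (x, x) = 0 *: (0, e) + (xi *: e + x, x).
  by rewrite !pair_scaleD ?scaler0 ?scale0r ?add0r ?addr0.
rewrite -/(F' t) -/(F' 0) Eeta.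
by rewrite !pair_scaleD ?scaler0 ?scale0r ?add0r ?addr0.
Qed.

Lemma mixed_difference_quotient (G : V * V -> R) (U : set V) (e x : V) :
  open U -> U x ->
  (forall y z, U y -> U z -> derivable G (y, z) (e, 0)) ->
  (forall y z, U y -> U z -> derivable ('D_(e, 0) G) (y, z) (0, e)) ->
  {for (x, x), continuous ('D_(0, e) ('D_(e, 0) G))} ->
  forall eps, 0 < eps -> exists2 d, 0 < d & forall s t,
    `|s| < d -> `|t| < d -> s != 0 -> t != 0 ->
    `|(s * t)^-1 * (G (s *: e + x, t *: e + x) - G (x, t *: e + x)
                    - G (s *: e + x, x) + G (x, x))
      - 'D_(0, e) ('D_(e, 0) G) (x, x)| < eps.
Proof.
move=> oU Ux dG ddG cddG eps eps0.
have /cvgrPdist_lt/(_ eps eps0)/nbhs_ballP[r r_gt0 near_xx] := cddG.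
have [d d_gt0 Hd] : exists2 d, 0 < d &
    forall u, `|u| < d -> U (u *: e + x) /\ ball x r (u *: e + x).
  apply/nbhs_norm0P; have hU := nbhs0_line e (open_nbhs_nbhs (conj oU Ux)).
  by have hB := nbhs0_line e (nbhsx_ballx x r r_gt0); near=> u; split; near: u.
exists d => // s t sd td s0 t0.
have near_d (u w : R) : `|u| <= `|w| -> `|w| < d -> U (u *: e + x) /\ ball x r (u *: e + x).
  by move=> uw wd; apply: Hd; exact: le_lt_trans uw wd.
have [xi [eta [xis etat ->]]] := second_difference_MVT (s := s) (t := t) dG ddG
  (fun u us => (near_d u s us sd).1) (fun u ut => (near_d u t ut td).1).
set D := 'D_(0, e) _ (xi *: e + x, _).
have -> : (s * t)^-1 * (D * t * s) = D by field; apply/andP.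
rewrite distrC.
by apply: near_xx; split; [exact: (near_d _ _ xis sd).2 | exact: (near_d _ _ etat td).2].
Unshelve. all: by end_near.
Qed.

End MixedDifferenceQuotient.

Section RKHSGeometry.
Variables (R : realType) (n : nat) (X : set 'rV[R]_n).
Variables (K : 'rV[R]_n -> 'rV[R]_n -> 'M[R]_n) (H : set (vfun R n)).
Variable ip : vfun R n -> vfun R n -> R.
Hypothesis RK : is_rkhs X K H ip.
Implicit Types (f g h u v w : vfun R n) (c : R).

Lemma rkhs0 : H 0. Proof. by case: RK. Qed.

Lemma rkhsD f g : H f -> H g -> H (f + g).
Proof. by case: RK => _ [+ _]; apply. Qed.

Lemma rkhsZ c f : H f -> H (c *: f).
Proof. by case: RK => _ [_ [+ _]]; apply. Qed.

Lemma rkhsP c f g : H f -> H g -> H (c *: f + g).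
Proof. by move=> Hf Hg; apply/rkhsD/Hg/rkhsZ. Qed.

Lemma rkhsB f g : H f -> H g -> H (f - g).
Proof. by move=> Hf Hg; rewrite -scaleN1r addrC; apply: rkhsP. Qed.

Lemma rkhs_Ksec x y : X x -> H (Ksec K x y).
Proof. by case: RK => _ [_ [_ [_ [_ [_ [_ [_ [+ _]]]]]]]]; apply. Qed.

Lemma ipC f g : H f -> H g -> ip f g = ip g f.
Proof. by case: RK => _ [_ [_ [+ _]]]; apply. Qed.

Lemma ipPl c f g h : H f -> H g -> H h -> ip (c *: f + g) h = c * ip f h + ip g h.
Proof. by case: RK => _ [_ [_ [_ [+ _]]]]; apply. Qed.

Lemma ip_ge0 f : H f -> 0 <= ip f f.
Proof. by case: RK => _ [_ [_ [_ [_ [+ _]]]]]; apply. Qed.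

Lemma ip_eq0 f : H f -> ip f f = 0 -> forall x, X x -> f x = 0.
Proof. by case: RK => _ [_ [_ [_ [_ [_ [+ _]]]]]]; apply. Qed.

Lemma rkhs_reprod f x y : H f -> X x -> (y^T *m f x) 0 0 = ip f (Ksec K x y).
Proof. by case: RK => _ [_ [_ [_ [_ [_ [_ [_ [_ +]]]]]]]]; apply. Qed.

Lemma ipPr c f g h : H f -> H g -> H h -> ip h (c *: f + g) = c * ip h f + ip h g.
Proof. by move=> Hf Hg Hh; rewrite ipC ?ipPl ?(ipC Hf) ?(ipC Hg) //; apply: rkhsP. Qed.

Lemma ip0l h : H h -> ip 0 h = 0.
Proof.
move=> Hh; have := ipPl 1 rkhs0 rkhs0 Hh.
rewrite scaler0 addr0 mul1r; lra.
Qed.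

Lemma ipZl c f h : H f -> H h -> ip (c *: f) h = c * ip f h.
Proof. by move=> Hf Hh; rewrite -[c *: f]addr0 ipPl ?ip0l ?addr0 //; exact: rkhs0. Qed.

Lemma ipBl f g h : H f -> H g -> H h -> ip (f - g) h = ip f h - ip g h.
Proof. by move=> Hf Hg Hh; rewrite -scaleN1r addrC ipPl // mulN1r addrC. Qed.

Lemma ipBr f g h : H f -> H g -> H h -> ip h (f - g) = ip h f - ip h g.
Proof. by move=> Hf Hg Hh; rewrite ipC ?ipBl ?(ipC Hf) ?(ipC Hg) //; apply: rkhsB. Qed.

Lemma ip_expand c u v : H u -> H v ->
  ip (c *: u + v) (c *: u + v) = c ^+ 2 * ip u u + 2 * c * ip u v + ip v v.
Proof. by move=> Hu Hv; rewrite ipPl ?ipPr ?(ipC Hv Hu) //; [ring | apply: rkhsP]. Qed.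

Lemma ip_Pythagoras u v : H u -> H v -> ip u v = 0 -> ip (u + v) (u + v) = ip u u + ip v v.
Proof. by move=> Hu Hv uv0; rewrite -[u]scale1r ip_expand // !scale1r uv0; ring. Qed.

Lemma ip_CauchySchwarz u v : H u -> H v -> ip u v ^+ 2 <= ip u u * ip v v.
Proof.
move=> Hu Hv.
have Q c : 0 <= c ^+ 2 * ip u u + 2 * c * ip u v + ip v v.
  by rewrite -ip_expand //; apply/ip_ge0/rkhsP.
have [uu0|uu0] := eqVneq (ip u u) 0.
  (* a nonzero [ip u v] would make the quadratic [Q] linear and unbounded below *)
  rewrite uu0 mul0r; have [->|uv0] := eqVneq (ip u v) 0; first by rewrite expr0n.
  have := Q (- (ip v v + 1) / (2 * ip u v)); rewrite uu0 mulr0 add0r.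
  have -> : 2 * (- (ip v v + 1) / (2 * ip u v)) * ip u v = - (ip v v + 1) by field.
  lra.
have uu_gt0 : 0 < ip u u by rewrite lt_neqAle eq_sym uu0 ip_ge0.
have := Q (- ip u v / ip u u).
have -> : (- ip u v / ip u u) ^+ 2 * ip u u + 2 * (- ip u v / ip u u) * ip u v + ip v v
  = (ip u u * ip v v - ip u v ^+ 2) / ip u u by field.
by rewrite pmulr_lge0 ?invr_gt0 // subr_ge0.
Qed.

Lemma ip_lt_of_small u v eps : H u -> H v -> 0 < eps ->
  ip v v < eps ^+ 2 / (ip u u + 1) -> `|ip u v| < eps.
Proof.
move=> Hu Hv eps0 small_v.
have uu0 := ip_ge0 Hu; have vv0 := ip_ge0 Hv.
have uv2 : ip u v ^+ 2 < eps ^+ 2.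
  apply: le_lt_trans (ip_CauchySchwarz Hu Hv) _.
  apply: le_lt_trans (_ : ip u u * (eps ^+ 2 / (ip u u + 1)) < _).
    exact/ler_wpM2l/ltW.
  rewrite mulrA ltr_pdivrMr; last by lra.
  have : 0 < eps ^+ 2 by apply: exprn_gt0.
  nra.
by rewrite ltr_norml; apply/andP; split; nra.
Qed.

Definition sqdist f g := ip (f - g) (f - g).

Lemma sqdist_triangle f g h : H f -> H g -> H h ->
  sqdist f h <= 2 * sqdist f g + 2 * sqdist g h.
Proof.
move=> Hf Hg Hh; have Hfg := rkhsB Hf Hg; have Hgh := rkhsB Hg Hh.
have -> : sqdist f h = ip (1 *: (f - g) + (g - h)) (1 *: (f - g) + (g - h)).
  by rewrite /sqdist scale1r addrA subrK.
rewrite ip_expand // /sqdist.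
have := ip_ge0 (rkhsP (-1) Hfg Hgh); rewrite ip_expand // sqrrN expr1n.
lra.
Qed.

Lemma rkhs_cauchy_cvg (F : R -> vfun R n) :
  (\forall t \near 0, H (F t)) ->
  (forall eps, 0 < eps -> exists2 d, 0 < d & forall s t,
     `|s| < d -> `|t| < d -> s != 0 -> t != 0 -> sqdist (F s) (F t) < eps) ->
  exists2 h, H h & forall eps, 0 < eps -> exists2 d, 0 < d & forall t,
     `|t| < d -> t != 0 -> sqdist (F t) h < eps.
Proof.
move=> /nbhs_norm0P[d0 d0_gt0 HF] cauchy.
pose tk k : R := d0 / k.+2%:R.
have tk_gt0 k : 0 < tk k by rewrite divr_gt0 ?ltr0n.
have tk_lt k : `|tk k| < d0.
  by rewrite gtr0_norm // ltr_pdivrMr ?ltr0n // ltr_pMr // ltr1n.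
have tk_small d : 0 < d -> exists N, forall k, (N <= k)%N -> `|tk k| < d.
  move=> d_gt0; exists (Num.trunc (d0 / d)) => k Nk.
  rewrite gtr0_norm // ltr_pdivrMr ?ltr0n // mulrC -ltr_pdivrMr //.
  by apply: lt_le_trans (truncnS_gt _) _; rewrite ler_nat ltnS leqW.
have Hk k : H (F (tk k)) by apply: HF; exact: tk_lt.
have [h [Hh F_cvg]] : exists h, H h /\ forall e : R, 0 < e -> exists N, forall i, (N <= i)%N ->
    ip (F (tk i) - h) (F (tk i) - h) < e.
  case: RK => _ [_ [_ [_ [_ [_ [_ [complete _]]]]]]]; apply: complete => // e e0.
  have [d d_gt0 Hd] := cauchy e e0; have [N HN] := tk_small d d_gt0.
  by exists N => i j Ni Nj; apply: Hd; rewrite ?HN ?gt_eqF.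
exists h => // eps eps0.
have eps4 : 0 < eps / 4 by rewrite divr_gt0.
have [d d_gt0 Hd] := cauchy _ eps4.
have [N1 HN1] := F_cvg _ eps4; have [N2 HN2] := tk_small d d_gt0.
exists (Num.min d d0); first by rewrite lt_min d_gt0.
move=> t; rewrite lt_min => /andP[td td0] t0; pose k := maxn N1 N2.
have := sqdist_triangle (HF t td0) (Hk k) Hh.
have := Hd t (tk k) td (HN2 _ (leq_maxr _ _)) t0 (lt0r_neq0 (tk_gt0 k)).
have : sqdist (F (tk k)) h < eps / 4 := HN1 _ (leq_maxl _ _).
lra.
Qed.

Lemma rkhs_weak_cvg (F : R -> vfun R n) h : H h -> (\forall t \near 0, H (F t)) ->
  (forall eps, 0 < eps -> exists2 d, 0 < d & forall t,
     `|t| < d -> t != 0 -> sqdist (F t) h < eps) ->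
  forall g, H g -> (fun t => ip (F t) g) @ 0^' --> ip h g.
Proof.
move=> Hh /nbhs_norm0P[d0 d0_gt0 HF] F_h g Hg; apply/cvgrPdist_lt => eps eps0.
have small_gt0 : 0 < eps ^+ 2 / (ip g g + 1).
  by rewrite divr_gt0 ?exprn_gt0 // ltr_pwDr ?ip_ge0.
have [d d_gt0 Hd] := F_h _ small_gt0.
near=> t; have Ht : H (F t) by apply: HF; near: t; exact: dnbhs0_lt.
have Hdiff := rkhsB Ht Hh.
rewrite distrC -ipBl // (ipC Hdiff Hg); apply: (ip_lt_of_small Hg Hdiff eps0).
apply: Hd; near: t; [exact: dnbhs0_lt | exact: nbhs_dnbhs_neq].
Unshelve. all: by end_near.
Qed.

Definition span (G : set (vfun R n)) g : Prop :=
  forall S : set (vfun R n), S 0 -> (forall c g1 g2, S g1 -> S g2 -> S (c *: g1 + g2)) ->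
  G `<=` S -> S g.

Lemma span_gen G g : G g -> span G g.
Proof. by move=> Gg S _ _; apply. Qed.

Lemma span_lin G c g1 g2 : span G g1 -> span G g2 -> span G (c *: g1 + g2).
Proof. by move=> sg1 sg2 S S0 SP GS; apply: (SP); [apply: sg1 | apply: sg2]. Qed.

Lemma span_sub G G' : G `<=` G' -> span G `<=` span G'.
Proof. by move=> GG' g sg S S0 SP G'S; apply: sg => // w /GG'/G'S. Qed.

Lemma span_rkhs G : G `<=` H -> span G `<=` H.
Proof. by move=> GH g; apply; [exact: rkhs0 | move=> c g1 g2; exact: rkhsP |]. Qed.

Lemma span_orth G r g : H r -> G `<=` H -> (forall w, G w -> ip r w = 0) ->
  span G g -> ip r g = 0.
Proof.
move=> Hr GH rG sg; suff [] : H g /\ ip r g = 0 by [].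
apply: (sg (fun g => H g /\ ip r g = 0)).
- by split; [exact: rkhs0 | rewrite ipC ?ip0l //; exact: rkhs0].
- move=> c g1 g2 [Hg1 rg1] [Hg2 rg2]; split; first exact: rkhsP.
  by rewrite ipPr // rg1 rg2 mulr0 addr0.
- by move=> w Gw; split; [exact: GH | exact: rG].
Qed.

Lemma rkhs_projection (T : eqType) (v : T -> vfun R n) (s : seq T) f :
  (forall t, H (v t)) -> H f ->
  exists2 fV, span [set v t | t in [set t | t \in s]] fV &
    forall t, t \in s -> ip (f - fV) (v t) = 0.
Proof.
move=> Hv; elim: s f => [|t0 s IH] f Hf.
  by exists 0 => // S S0.
set G := [set v t | t in [set t | t \in s]].
have GH : G `<=` H by move=> _ [t _ <-].
have G_sub : G `<=` [set v t | t in [set t | t \in t0 :: s]].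
  by move=> _ [t ts <-]; exists t => //=; rewrite inE ts orbT.
have [fV' sfV' f_orth] := IH f Hf; have [vV' svV' v_orth] := IH (v t0) (Hv t0).
have HfV' := span_rkhs GH sfV'; have HvV' := span_rkhs GH svV'.
(* Gram-Schmidt step: [w] is the part of [v t0] orthogonal to the span of [s] *)
pose w := v t0 - vV'; pose r := f - fV'.
have Hw : H w by apply: rkhsB.
have Hr : H r by apply: rkhsB.
(* if [ip w w = 0] then [al = 0] (division by zero), and [ip r w = 0] by Cauchy-Schwarz *)
pose al := ip r w / ip w w.
have r_w : ip r w = al * ip w w.
  have [ww0|ww0] := eqVneq (ip w w) 0; last by rewrite divfK.
  have := ip_CauchySchwarz Hr Hw; rewrite ww0 !mulr0 => rw_le0.
  by apply/eqP; rewrite -sqrf_eq0 eq_le rw_le0 sqr_ge0.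
exists (al *: w + fV').
  apply: span_lin; last exact: span_sub sfV'.
  rewrite /w -scaleN1r addrC; apply: span_lin; first exact: span_sub svV'.
  by apply: span_gen; exists t0 => //=; rewrite inE eqxx.
have -> : f - (al *: w + fV') = (- al) *: w + r by rewrite scaleNr opprD addrCA.
have Hres : H ((- al) *: w + r) by apply: rkhsP.
have w_G u : G u -> ip w u = 0 by move=> [t ts <-]; exact: v_orth.
have r_G u : G u -> ip r u = 0 by move=> [t ts <-]; exact: f_orth.
have res_G u : G u -> ip ((- al) *: w + r) u = 0.
  by move=> Gu; have Hu := GH _ Gu; rewrite ipPl // w_G // r_G // mulr0 addr0.
move=> t; rewrite inE => /orP[/eqP ->|ts]; last by apply: res_G; exists t.
have -> : v t0 = 1 *: w + vV' by rewrite scale1r subrK.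
rewrite ipPr // (span_orth Hres GH res_G svV') ipPl // r_w.
by rewrite mulNr addNr mulr0 addr0.
Qed.

End RKHSGeometry.

Lemma mulmx_delta_col (R : pzRingType) (n : nat) (M : 'M[R]_n) (b c : 'I_n) :
  (M *m (delta_mx c 0 : 'cV[R]_n)) b 0 = M b c.
Proof. by rewrite -colE mxE. Qed.

Lemma delta_row_mulmx (R : pzRingType) (n : nat) (v : 'cV[R]_n) (b : 'I_n) :
  ((delta_mx b 0 : 'cV[R]_n)^T *m v) 0 0 = v b 0.
Proof. by rewrite trmx_delta -rowE mxE. Qed.

Lemma pdir2_lshift (R : realType) (n : nat) (p : 'I_n) : pdir2 R (lshift n p) = (ebasis R p, 0).
Proof. by rewrite /pdir2 -[lshift n p]/(unsplit (inl _ p)) unsplitK. Qed.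

Lemma pdir2_rshift (R : realType) (n : nat) (p : 'I_n) : pdir2 R (rshift n p) = (0, ebasis R p).
Proof. by rewrite /pdir2 -[rshift n p]/(unsplit (inr _ p)) unsplitK. Qed.

Section DerivativeRepresenter.
Variables (R : realType) (n : nat) (X : set 'rV[R]_n).
Variables (K : 'rV[R]_n -> 'rV[R]_n -> 'M[R]_n) (H : set (vfun R n)).
Variable ip : vfun R n -> vfun R n -> R.
Hypotheses (oX : open X) (KC2 : kernel_C2 X K) (RK : is_rkhs X K H ip).

Lemma rkhs_coordE g z b : H g -> X z -> g z b 0 = ip g (Ksec K z (delta_mx b 0)).
Proof. by move=> Hg Xz; rewrite -(rkhs_reprod RK) // delta_row_mulmx. Qed.

Lemma ip_Ksec u v b c : X u -> X v ->
  ip (Ksec K u (delta_mx c 0)) (Ksec K v (delta_mx b 0)) = K v u b c.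
Proof.
move=> Xu Xv; have HKu := rkhs_Ksec RK (delta_mx c 0) Xu.
by rewrite -rkhs_coordE // /Ksec mulmx_delta_col.
Qed.

Lemma rkhs_kernel_sym u v b c : X u -> X v -> K u v b c = K v u c b.
Proof.
move=> Xu Xv; rewrite -!ip_Ksec //.
by apply: (ipC RK); apply: (rkhs_Ksec RK).
Qed.

Variables (p a : 'I_n) (x : 'rV[R]_n).
Hypothesis Xx : X x.

Definition Kdq (t : R) : vfun R n :=
  t^-1 *: (Ksec K (t *: ebasis R p + x) (delta_mx a 0) - Ksec K x (delta_mx a 0)).

Lemma Kdq_coord t y : Kdq t y a 0 = t^-1 * (K y (t *: ebasis R p + x) a a - K y x a a).
Proof. by rewrite /Kdq !fctE /Ksec /= -mulmxBl scalemxAl mulmx_delta_col !mxE. Qed.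

Lemma rkhs_Kdq t : X (t *: ebasis R p + x) -> H (Kdq t).
Proof. by move=> Xt; apply/(rkhsZ RK)/(rkhsB RK); apply: (rkhs_Ksec RK). Qed.

Lemma ip_Kdq t g : X (t *: ebasis R p + x) -> H g ->
  ip (Kdq t) g = t^-1 * (g (t *: ebasis R p + x) a 0 - g x a 0).
Proof.
move=> Xt Hg; have HKt := rkhs_Ksec RK (delta_mx a 0) Xt.
have HKx := rkhs_Ksec RK (delta_mx a 0) Xx.
rewrite (ipZl RK _ (rkhsB RK HKt HKx) Hg) (ipBl RK HKt HKx Hg).
by rewrite (ipC RK HKt Hg) (ipC RK HKx Hg) -!rkhs_coordE.
Qed.

Lemma near0_line_X : exists2 d, 0 < d & forall t, `|t| < d -> X (t *: ebasis R p + x).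
Proof. by apply/nbhs_norm0P/nbhs0_line/open_nbhs_nbhs. Qed.

Lemma Kdq_cauchy eps : 0 < eps -> exists2 d, 0 < d & forall s t,
  `|s| < d -> `|t| < d -> s != 0 -> t != 0 -> sqdist ip (Kdq s) (Kdq t) < eps.
Proof.
move=> eps0; have eps4 : 0 < eps / 4 by rewrite divr_gt0.
pose G q := K q.1 q.2 a a.
have [_ /(_ (lshift n p)) [dG [_ /(_ (rshift n p)) [ddG cddG]]]] := KC2 a a.
rewrite pdir2_lshift pdir2_rshift in dG ddG cddG.
have [d1 d1_gt0 Hd1] := mixed_difference_quotient oX Xx
  (fun y z Xy Xz => dG (y, z) (conj Xy Xz)) (fun y z Xy Xz => ddG (y, z) (conj Xy Xz))
  (cddG (x, x) (conj Xx Xx)) eps4.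
have [d2 d2_gt0 Hd2] := near0_line_X.
exists (Num.min d1 d2); first by rewrite lt_min d1_gt0.
move=> s t; rewrite !lt_min => /andP[s1 s2] /andP[t1 t2] s0 t0.
have [Hs Ht] := (rkhs_Kdq (Hd2 _ s2), rkhs_Kdq (Hd2 _ t2)).
(* [ip (Kdq u) (Kdq v)] is a second difference quotient of [K _ _ a a] *)
have Q u v : `|u| < d1 -> `|v| < d1 -> `|u| < d2 -> `|v| < d2 -> u != 0 -> v != 0 ->
    `|ip (Kdq u) (Kdq v) - 'D_(0, ebasis R p) ('D_(ebasis R p, 0) G) (x, x)| < eps / 4.
  move=> u1 v1 u2 v2 u0 v0.
  rewrite (ip_Kdq (Hd2 _ u2) (rkhs_Kdq (Hd2 _ v2))) !Kdq_coord.
  have -> : u^-1 * (v^-1 * (K (u *: ebasis R p + x) (v *: ebasis R p + x) a a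
      - K (u *: ebasis R p + x) x a a) - v^-1 * (K x (v *: ebasis R p + x) a a - K x x a a))
    = (u * v)^-1 * (G (u *: ebasis R p + x, v *: ebasis R p + x) - G (x, v *: ebasis R p + x)
      - G (u *: ebasis R p + x, x) + G (x, x)) by rewrite /G /= invfM; ring.
  exact: Hd1.
have := Q s s s1 s1 s2 s2 s0 s0; have := Q s t s1 t1 s2 t2 s0 t0.
have := Q t s t1 s1 t2 s2 t0 s0; have := Q t t t1 t1 t2 t2 t0 t0.
rewrite /sqdist (ipBl RK Hs Ht (rkhsB RK Hs Ht)) (ipBr RK Hs Ht Hs) (ipBr RK Hs Ht Ht).
rewrite !ltr_norml => /andP[? ?] /andP[? ?] /andP[? ?] /andP[? ?].
lra.
Qed.

Lemma rkhs_derivative_representer : exists h, [/\ H h,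
  forall g, H g -> 'D_(ebasis R p) (fun z => g z a 0) x = ip g h
  & forall z, X z -> h z = dKsec K p x (delta_mx a 0) z].
Proof.
have [d d_gt0 Xline] := near0_line_X.
have near_H : \forall t \near 0, H (Kdq t).
  by apply/nbhs_norm0P; exists d => // t /Xline; exact: rkhs_Kdq.
have [h Hh Kdq_h] := rkhs_cauchy_cvg RK near_H Kdq_cauchy.
have derive_on_X (F : 'rV[R]_n -> R) g : H g -> (forall y, X y -> F y = g y a 0) ->
    'D_(ebasis R p) F x = ip g h.
  move=> Hg FX; rewrite (ipC RK Hg Hh); apply: cvg_lim => //.
  apply: cvg_trans (rkhs_weak_cvg RK Hh near_H Kdq_h Hg); apply: near_eq_cvg.
  near=> t; have Xt : X (t *: ebasis R p + x) by apply: Xline; near: t; exact: dnbhs0_lt.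
  by rewrite /= ip_Kdq // !FX.
exists h; split => // [g Hg|z Xz]; first exact: derive_on_X.
(* [dKsec] differentiates [K] in its second argument; the symmetry of [K] on [X]
   moves the derivative to the first one, where [derive_on_X] applies *)
apply/matrixP => b j; rewrite (ord1 j) rkhs_coordE //.
rewrite (ipC RK Hh (rkhs_Ksec RK _ Xz)) /dKsec mulmx_delta_col mxE.
apply/esym/derive_on_X => [|y Xy]; first exact: (rkhs_Ksec RK _ Xz).
by rewrite /Ksec mulmx_delta_col (rkhs_kernel_sym b a Xz Xy).
Unshelve. all: by end_near.
Qed.

End DerivativeRepresenter.

Section FiniteSubspace.
Variables (R : realType) (n Nc : nat) (X : set 'rV[R]_n).
Variables (K : 'rV[R]_n -> 'rV[R]_n -> 'M[R]_n) (xc : 'I_Nc -> 'rV[R]_n).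
Implicit Types (f g : vfun R n).

Lemma in_V_eq_on f g : (forall z, X z -> f z = g z) -> in_V X K xc g -> in_V X K xc f.
Proof. by move=> fg [A [A' EA]]; exists A, A' => z Xz; rewrite fg // EA. Qed.

Lemma in_V0 : in_V X K xc 0.
Proof.
exists (fun _ => 0), (fun _ _ => 0) => z _.
rewrite /Ksec /dKsec big1 ?add0r => [|i _]; last by rewrite mulmx0.
by rewrite big1 // => i _; rewrite big1 // => q _; rewrite mulmx0.
Qed.

Lemma in_VP c f g : in_V X K xc f -> in_V X K xc g -> in_V X K xc (c *: f + g).
Proof.
move=> [A [A' EA]] [B [B' EB]].
exists (fun i => c *: A i + B i), (fun i q => c *: A' i q + B' i q) => z Xz.
rewrite !fctE /= EA // EB // scalerDr addrACA /Ksec /dKsec.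
congr (_ + _); rewrite scaler_sumr -big_split; apply: eq_bigr => i _.
  by rewrite mulmxDr scalemxAr.
by rewrite scaler_sumr -big_split; apply: eq_bigr => q _; rewrite mulmxDr scalemxAr.
Qed.

Lemma in_V_Ksec i y : in_V X K xc (Ksec K (xc i) y).
Proof.
exists (fun k => if k == i then y else 0), (fun _ _ => 0) => z _.
rewrite [X in _ = X + _](bigD1 i) //= eqxx big1 ?addr0 => [|k /negbTE ki]; last first.
  by rewrite /Ksec ki mulmx0.
by rewrite big1 ?addr0 // => k _; rewrite big1 // => q _; rewrite /dKsec mulmx0.
Qed.

Lemma in_V_dKsec i p y : in_V X K xc (dKsec K p (xc i) y).
Proof.
exists (fun _ => 0), (fun k q => if (k == i) && (q == p) then y else 0) => z _.
rewrite big1 ?add0r => [|k _]; last by rewrite /Ksec mulmx0.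
rewrite (bigD1 i) //= (bigD1 p) //= !eqxx big1 ?addr0 => [|q /negbTE qp]; last first.
  by rewrite qp /dKsec mulmx0.
by rewrite /= big1 ?addr0 // => k /negbTE ->; rewrite big1 // => q _; rewrite /dKsec mulmx0.
Qed.

End FiniteSubspace.

Section Representer.
Variables (R : realType) (n Nc : nat) (X : set 'rV[R]_n).
Variables (K : 'rV[R]_n -> 'rV[R]_n -> 'M[R]_n) (H : set (vfun R n)).
Variable ip : vfun R n -> vfun R n -> R.
Hypotheses (oX : open X) (KC2 : kernel_C2 X K) (RK : is_rkhs X K H ip).
Variable xc : 'I_Nc -> 'rV[R]_n.
Hypothesis Xxc : forall i, X (xc i).

Lemma rkhs_eq_of_orth f g z : H f -> H g -> X z ->
  (forall b, ip (f - g) (Ksec K z (delta_mx b 0)) = 0) -> f z = g z.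
Proof.
move=> Hf Hg Xz fg_orth; apply/matrixP => b j; rewrite (ord1 j) !(rkhs_coordE RK) //.
have HK := rkhs_Ksec RK (delta_mx b 0) Xz.
by apply/eqP; rewrite -subr_eq0 -(ipBl RK) // fg_orth.
Qed.

Lemma rkhs_representer f : H f -> exists fV,
  [/\ H fV /\ in_V X K xc fV, forall i, fV (xc i) = f (xc i),
      forall i, jac fV (xc i) = jac f (xc i), ip fV fV <= ip f f
    & ip f f <= ip fV fV -> in_V X K xc f].
Proof.
move=> Hf.
have /boolp.choice[dK dKP] := fun q : 'I_Nc * 'I_n * 'I_n =>
  rkhs_derivative_representer oX KC2 RK q.1.2 q.2 (Xxc q.1.1).
pose gen (q : 'I_Nc * 'I_n + 'I_Nc * 'I_n * 'I_n) := match q with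
  | inl (i, b) => Ksec K (xc i) (delta_mx b 0) | inr q' => dK q' end.
have Hgen q : H (gen q).
  by case: q => [[i b]|q]; [exact: (rkhs_Ksec RK _ (Xxc i)) | case: (dKP q)].
pose idx := enum {: 'I_Nc * 'I_n + 'I_Nc * 'I_n * 'I_n}.
have genH : [set gen q | q in [set q | q \in idx]] `<=` H by move=> _ [q _ <-].
have [fV span_fV orth] := rkhs_projection RK idx Hgen Hf.
have orth_gen q : ip (f - fV) (gen q) = 0 by apply: orth; rewrite mem_enum.
have HfV := span_rkhs RK genH span_fV; have Hr := rkhsB RK Hf HfV.
have pyth : ip f f = ip (f - fV) (f - fV) + ip fV fV.
  rewrite -(ip_Pythagoras RK) ?subrK //.
  by apply: (span_orth RK Hr genH) span_fV => _ [q _ <-]; exact: orth_gen.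
have r_ge0 := ip_ge0 RK Hr.
have VfV : in_V X K xc fV.
  apply: span_fV; [exact: in_V0 | exact: in_VP |].
  move=> _ [[[i b]|q] _ <-]; first exact: in_V_Ksec.
  by case: (dKP q) => _ _ dK_val; apply: in_V_eq_on dK_val _; apply: in_V_dKsec.
exists fV; split=> //.
- move=> i; apply/esym/(rkhs_eq_of_orth Hf HfV (Xxc i)) => b.
  exact: (orth_gen (inl (i, b))).
- move=> i; apply/matrixP => b p; rewrite !mxE.
  case: (dKP (i, p, b)) => HdK /= dK_D _; rewrite !dK_D //.
  have := orth_gen (inr (i, p, b)); rewrite /= (ipBl RK Hf HfV HdK) => /eqP.
  by rewrite subr_eq0 => /eqP ->.
- lra.
- move=> f_le; apply: in_V_eq_on VfV => z Xz; apply/eqP; rewrite -subr_eq0; apply/eqP.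
  by apply: (ip_eq0 RK Hr) => //; lra.
Qed.

End Representer.

Lemma Flam_congr (R : realType) (n m : nat) (lam : R) (f g : vfun R n)
    (W : 'rV[R]_n -> 'M[R]_n) (x : 'rV[R]_n) :
  f x = g x -> jac f x = jac g x -> Flam m lam f W x = Flam m lam g W x.
Proof. by move=> fg jfg; rewrite /Flam /dirW fg jfg. Qed.

Lemma Jd_congr (R : realType) (n m N : nat) (xs : 'I_N -> 'rV[R]_n)
    (us : 'I_N -> 'cV[R]_m) (xds : 'I_N -> 'cV[R]_n) (muf mub : R)
    (ipf ipb : vfun R n -> vfun R n -> R) (f f' : vfun R n) (b b' : 'I_m -> vfun R n) :
  (forall i, f' (xs i) = f (xs i)) -> (forall j i, b' j (xs i) = b j (xs i)) ->
  Jd xs us xds muf mub ipf ipb f' b' - Jd xs us xds muf mub ipf ipb f b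
  = muf * (ipf f' f' - ipf f f)
    + mub * (\sum_(j < m) ipb (b' j) (b' j) - \sum_(j < m) ipb (b j) (b j)).
Proof.
move=> ff' bb'.
have Bhat_xs i : Bhat b' (xs i) = Bhat b (xs i) by apply/matrixP => a j; rewrite !mxE bb'.
by rewrite /Jd; under eq_bigr => i _ do rewrite ff' Bhat_xs; ring.
Qed.

Lemma ler_sum_eq (R : realType) (I : finType) (F G : I -> R) :
  (forall i, F i <= G i) -> \sum_i G i <= \sum_i F i -> forall i, F i = G i.
Proof.
move=> FG GF i.
have GF_ge0 j : true -> 0 <= G j - F j by rewrite subr_ge0.
have GF0 : \sum_j (G j - F j) = 0.
  by apply/eqP; rewrite eq_le (sumr_ge0 _ GF_ge0) andbT sumrB subr_le0.
by apply/esym/eqP; rewrite -subr_eq0 (psumr_eq0P GF_ge0 GF0).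
Qed.

Theorem theorem3 (R : realType) (n m : nat) (X : set 'rV[R]_n)
  (N : nat) (xs : 'I_N -> 'rV[R]_n) (us : 'I_N -> 'cV[R]_m) (xds : 'I_N -> 'cV[R]_n)
  (Nc : nat) (xc : 'I_Nc -> 'rV[R]_n)
  (Kf KB : 'rV[R]_n -> 'rV[R]_n -> 'M[R]_n)
  (Hf HB : set (vfun R n)) (ipf ipb : vfun R n -> vfun R n -> R)
  (lam muf mub : R) (W : 'rV[R]_n -> 'M[R]_n)
  (fs : vfun R n) (bs : 'I_m -> vfun R n) :
  open X -> connected X -> bounded_set X ->
  (1 <= m)%N -> (m < n)%N ->
  (forall i, X (xs i)) ->
  (forall i, X (xc i)) ->
  (forall i, exists k, xs i = xc k) ->
  kernel_C2 X Kf -> pd_kernel X Kf -> is_rkhs X Kf Hf ipf ->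
  kernel_C2 X KB -> pd_kernel X KB -> is_rkhs X KB HB ipb ->
  (forall g, HB g -> forall x, X x -> forall j : 'I_n, (j < n - m)%N -> g x j 0 = 0) ->
  0 < lam -> 0 < muf -> 0 < mub ->
  (forall x, X x -> (W x)^T = W x) ->
  (forall x, X x -> forall p q : 'I_n, differentiable (fun z => W z p q) x) ->
  (exists f, Hf f /\ forall i, loewner_le (Flam m lam f W (xc i)) 0) ->
  (* (fs, bs) is an optimizer *)
  Hf fs -> (forall j, HB (bs j)) ->
  (forall i, loewner_le (Flam m lam fs W (xc i)) 0) ->
  (forall (f : vfun R n) (b : 'I_m -> vfun R n), Hf f -> (forall j, HB (b j)) ->
     (forall i, loewner_le (Flam m lam f W (xc i)) 0) ->
     Jd xs us xds muf mub ipf ipb fs bs <= Jd xs us xds muf mub ipf ipb f b) ->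
  in_V X Kf xc fs /\ forall j, in_V X KB xc (bs j).
Proof.
move=> oX _ _ _ _ _ Xxc xs_xc KfC2 _ RKf KBC2 _ RKB _ _ muf0 mub0 _ _ _ Hfs Hbs fs_feas opt.
have on_xs (g g' : vfun R n) :
    (forall k, g (xc k) = g' (xc k)) -> forall i, g (xs i) = g' (xs i).
  by move=> E i; have [k ->] := xs_xc i.
have [fV [[HfV _] fV_xc fV_jac _ fV_min]] := rkhs_representer oX KfC2 RKf Xxc Hfs.
have /boolp.choice[bV bVP] := fun j => rkhs_representer oX KBC2 RKB Xxc (Hbs j).
have HbV j : HB (bV j) by case: (bVP j) => -[].
split.
  have fV_feas i : loewner_le (Flam m lam fV W (xc i)) 0.
    by rewrite (Flam_congr m lam W (fV_xc i) (fV_jac i)).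
  have := opt fV bs HfV Hbs fV_feas; rewrite -subr_ge0.
  rewrite (Jd_congr _ _ _ _ _ _ (on_xs _ _ fV_xc) (fun j i => erefl)) subrr mulr0 addr0.
  by rewrite pmulr_rge0 // subr_ge0; exact: fV_min.
have bV_le j : ipb (bV j) (bV j) <= ipb (bs j) (bs j) by case: (bVP j).
have := opt fs bV Hfs HbV fs_feas; rewrite -subr_ge0.
have bV_xs j : forall i, bV j (xs i) = bs j (xs i) by apply: on_xs; case: (bVP j).
rewrite (Jd_congr _ _ _ _ _ _ (fun i => erefl) bV_xs) subrr mulr0 add0r.
rewrite pmulr_rge0 // subr_ge0 => sum_le j.
by case: (bVP j) => _ _ _ _; apply; rewrite (ler_sum_eq bV_le sum_le j).
Qed.
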